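(* (i) Suppose $\mathbf A$ is a category with small coproducts whose initial object admits no morphisms into it from non-initial objects (e.g. $\mathbf A$ a variety with no zeroary operations), and $\mathbf D$ is a variety with at least one zeroary operation. Then for every $\mathbf D$-coalgebra $R$ in $\mathbf A$, $|R|$ is the initial object of $\mathbf A$, so the functor $\mathbf A(R,-)$ sends every object to the one-element $\mathbf D$-algebra; in particular this trivial functor is the initial object of $\mathrm{Rep}(\mathbf A,\mathbf D)$. (ii) Suppose $\mathbf A$ is a category with small coproducts whose initial object is also a final object (e.g. a variety with exactly one derived zeroary operation), and $\mathbf D$ is any variety. Then $\mathrm{Rep}(\mathbf A,\mathbf D)$ has an initial object, namely the functor sending every object to the one-element $\mathbf D$-algebra, represented by the initial-final object of $\mathbf A$ with its unique $\mathbf D$-coalgebra structure. (iii) Suppose $\mathbf A$ is a category with small coproducts and a final object such that the unique morphism from the initial to the final object is an epimorphism but not an isomorphism (e.g. a variety with more than one derived zeroary operation), and $\mathbf D$ is a variety with at most one derived zeroary operation. Then $\mathrm{Rep}(\mathbf A,\mathbf D)$ has an initial object $F$: (a) if $\mathbf D$ has no zeroary operations, $F$ is represented by the final object of $\mathbf A$ with its unique $\mathbf D$-coalgebra structure, and $F$ sends an object of $\mathbf A$ to the one-element $\mathbf D$-algebra if it admits a morphism from the final object, and to the empty $\mathbf D$-algebra otherwise; (b) if $\mathbf D$ has exactly one derived zeroary operation, $F$ is represented by the initial object of $\mathbf A$ with its unique $\mathbf D$-coalgebra structure, and sends every object to the one-element algebra. Consequently, when $\mathbf A$ is a variety, the initial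 object of $\mathrm{Rep}(\mathbf A,\mathbf D)$ can take values that are not all algebras with $0$ or $1$ elements only if either neither $\mathbf A$ nor $\mathbf D$ has zeroary operations, or both $\mathbf A$ and $\mathbf D$ have more than one derived zeroary operation.
   Context: A variety $\mathbf D$ is specified by a small set $\Omega_{\mathbf D}$ of operation symbols with cardinal arities $\mathrm{ari}(\alpha)$ (possibly infinite) and a set of identities. A derived zeroary operation is a zeroary term built from the primitive operations. $\coprod_\kappa X$ denotes the $\kappa$-fold copower of $X$. An $\Omega_{\mathbf D}$-coalgebra $R$ in a category $\mathbf A$ with coproducts is an object $|R|$ with co-operations $\alpha^R:|R|\to\coprod_{\mathrm{ari}(\alpha)}|R|$ ($\alpha\in\Omega_{\mathbf D}$); these make each hom-set $\mathbf A(|R|,A)$ an $\Omega_{\mathbf D}$-algebra $\mathbf A(R,A)$. $R$ is a $\mathbf D$-coalgebra if every $\mathbf A(R,A)$ satisfies the identities of $\mathbf D$ (equivalently, the tuple of coprojections into the appropriate copower satisfies them). $\mathrm{Rep}(\mathbf A,\mathbf D)$ is the full subcategory of $\mathbf{Cat}(\mathbf A,\mathbf D)$ consisting of functors $\mathbf A(R,-)$ with $R$ a $\mathbf D$-coalgebra; it is equivalent to the opposite of the category $\mathrm{Coalg}(\mathbf A,\mathbf D)$ of $\mathbf D$-coalgebras (morphisms are morphisms of underlying objects commuting with co-operations). *)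

From Stdlib Require Import ProofIrrelevance.

Record Category := {
  Obj :> Type;
  Hom : Obj -> Obj -> Type;
  idm : forall X : Obj, Hom X X;
  comp : forall X Y Z : Obj, Hom Y Z -> Hom X Y -> Hom X Z;
  comp_assoc : forall (X Y Z W : Obj) (h : Hom Z W) (g : Hom Y Z) (f : Hom X Y),
      comp X Z W h (comp X Y Z g f) = comp X Y W (comp Y Z W h g) f;
  comp_id_l : forall (X Y : Obj) (f : Hom X Y), comp X Y Y (idm Y) f = f;
  comp_id_r : forall (X Y : Obj) (f : Hom X Y), comp X X Y f (idm X) = f
}.
Arguments Hom {c} X Y.
Arguments idm {c} X.
Arguments comp {c} {X Y Z} _ _.

Definition IsInitial (C : Category) (X : Obj C) : Prop :=
  forall Y : Obj C, exists f : Hom X Y, forall g : Hom X Y, g = f.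
Definition IsFinal (C : Category) (X : Obj C) : Prop :=
  forall Y : Obj C, exists f : Hom Y X, forall g : Hom Y X, g = f.
Definition Epi (C : Category) (X Y : Obj C) (f : Hom X Y) : Prop :=
  forall (Z : Obj C) (g h : Hom Y Z), comp g f = comp h f -> g = h.
Definition Iso (C : Category) (X Y : Obj C) (f : Hom X Y) : Prop :=
  exists g : Hom Y X, comp g f = idm X /\ comp f g = idm Y.

Record Coproducts (C : Category) := {
  coprod : forall (I : Type), (I -> Obj C) -> Obj C;
  coinj : forall (I : Type) (X : I -> Obj C) (i : I), Hom (X i) (coprod I X);
  copair : forall (I : Type) (X : I -> Obj C) (Y : Obj C),
      (forall i : I, Hom (X i) Y) -> Hom (coprod I X) Y;
  copair_inj : forall (I : Type) (X : I -> Obj C) (Y : Obj C)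
      (f : forall i : I, Hom (X i) Y) (i : I),
      comp (copair I X Y f) (coinj I X i) = f i;
  copair_unique : forall (I : Type) (X : I -> Obj C) (Y : Obj C)
      (f : forall i : I, Hom (X i) Y) (h : Hom (coprod I X) Y),
      (forall i : I, comp h (coinj I X i) = f i) -> h = copair I X Y f
}.
Arguments coprod {C} c I X.
Arguments coinj {C} c {I X} i.
Arguments copair {C} c {I X Y} f.

Record Sig := { op : Type; ar : op -> Type }.

Inductive term (S : Sig) (V : Type) : Type :=
| tvar : V -> term S V
| tapp : forall o : op S, (ar S o -> term S V) -> term S V.
Arguments tvar {S V} v.
Arguments tapp {S V} o ts.

Record Variety := {
  vsig : Sig;
  ax : Type;
  ax_vars : ax -> Type;
  ax_lhs : forall e : ax, term vsig (ax_vars e);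
  ax_rhs : forall e : ax, term vsig (ax_vars e)
}.

Definition OpsOn (S : Sig) (A : Type) : Type := forall o : op S, (ar S o -> A) -> A.

Fixpoint eval {S : Sig} {A : Type} (I : OpsOn S A) {V : Type} (env : V -> A)
  (t : term S V) : A :=
  match t with
  | tvar v => env v
  | tapp o ts => I o (fun k => eval I env (ts k))
  end.

Definition Satisfies (D : Variety) (A : Type) (I : OpsOn (vsig D) A) : Prop :=
  forall (e : ax D) (env : ax_vars D e -> A),
    eval I env (ax_lhs D e) = eval I env (ax_rhs D e).

Definition NoZeroary (D : Variety) : Prop :=
  forall o : op (vsig D), inhabited (ar (vsig D) o).
Definition HasZeroary (D : Variety) : Prop :=
  exists o : op (vsig D), ar (vsig D) o -> False.

(* derived zeroary operations = closed terms, compared in all D-algebras *)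
Definition ceval {S : Sig} {A : Type} (I : OpsOn S A) (t : term S Empty_set) : A :=
  eval I (fun e : Empty_set => match e with end) t.

Definition AtMostOneDerivedConst (D : Variety) : Prop :=
  forall (A : Type) (I : OpsOn (vsig D) A), Satisfies D A I ->
    forall t1 t2 : term (vsig D) Empty_set, ceval I t1 = ceval I t2.
Definition ExactlyOneDerivedConst (D : Variety) : Prop :=
  inhabited (term (vsig D) Empty_set) /\ AtMostOneDerivedConst D.
Definition ManyDerivedConst (D : Variety) : Prop :=
  exists (t1 t2 : term (vsig D) Empty_set) (A : Type) (I : OpsOn (vsig D) A),
    Satisfies D A I /\ ceval I t1 <> ceval I t2.

Definition CoOps (C : Category) (CP : Coproducts C) (S : Sig) (X : Obj C) : Type :=
  forall o : op S, Hom X (coprod CP (ar S o) (fun _ => X)).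

(* the Omega-algebra structure on the hom-set A(R,Y) *)
Definition hom_ops {C : Category} {CP : Coproducts C} {S : Sig} {X : Obj C}
  (s : CoOps C CP S X) (Y : Obj C) : OpsOn S (Hom X Y) :=
  fun o fs => comp (copair CP (X := fun _ => X) fs) (s o).

Definition IsDCoalg (C : Category) (CP : Coproducts C) (D : Variety) (X : Obj C)
  (s : CoOps C CP (vsig D) X) : Prop :=
  forall Y : Obj C, Satisfies D (Hom X Y) (hom_ops s Y).

Definition IsRepMor (C : Category) (CP : Coproducts C) (D : Variety)
  (X : Obj C) (s : CoOps C CP (vsig D) X) (Y : Obj C) (t : CoOps C CP (vsig D) Y)
  (eta : forall Z : Obj C, Hom X Z -> Hom Y Z) : Prop :=
  (forall (Z W : Obj C) (g : Hom Z W) (f : Hom X Z), eta W (comp g f) = comp g (eta Z f)) /\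
  (forall (Z : Obj C) (o : op (vsig D)) (fs : ar (vsig D) o -> Hom X Z),
      eta Z (hom_ops s Z o fs) = hom_ops t Z o (fun k => eta Z (fs k))).

Definition RepInitial (C : Category) (CP : Coproducts C) (D : Variety)
  (X : Obj C) (s : CoOps C CP (vsig D) X) : Prop :=
  IsDCoalg C CP D X s /\
  forall (Y : Obj C) (t : CoOps C CP (vsig D) Y), IsDCoalg C CP D Y t ->
    exists eta : forall Z : Obj C, Hom X Z -> Hom Y Z,
      IsRepMor C CP D X s Y t eta /\
      forall eta', IsRepMor C CP D X s Y t eta' ->
        forall (Z : Obj C) (f : Hom X Z), eta' Z f = eta Z f.

Definition Singleton (T : Type) : Prop := exists x : T, forall y : T, y = x.
Definition EmptyT (T : Type) : Prop := T -> False.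

Record AlgObj (V : Variety) := {
  acar : Type;
  aops : OpsOn (vsig V) acar;
  asat : Satisfies V acar aops
}.
Arguments acar {V} a.
Arguments aops {V} a.

Definition IsAlgHom (V : Variety) (A B : AlgObj V) (f : acar A -> acar B) : Prop :=
  forall (o : op (vsig V)) (xs : ar (vsig V) o -> acar A),
    f (aops A o xs) = aops B o (fun k => f (xs k)).

Definition AlgHom (V : Variety) (A B : AlgObj V) : Type :=
  { f : acar A -> acar B | IsAlgHom V A B f }.

Definition alg_id (V : Variety) (A : AlgObj V) : AlgHom V A A.
Proof. exists (fun x => x). intros o xs. reflexivity. Defined.

Definition alg_comp (V : Variety) (A B E : AlgObj V)
  (g : AlgHom V B E) (f : AlgHom V A B) : AlgHom V A E.
Proof.
  exists (fun x => proj1_sig g (proj1_sig f x)).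
  intros o xs. rewrite (proj2_sig f). apply (proj2_sig g).
Defined.

Definition VarCat (V : Variety) : Category.
Proof.
  refine {| Obj := AlgObj V; Hom := AlgHom V; idm := alg_id V;
            comp := alg_comp V |}.
  - intros. apply ProofIrrelevanceTheory.subset_eq_compat. reflexivity.
  - intros X Y [f pf]. apply ProofIrrelevanceTheory.subset_eq_compat. reflexivity.
  - intros X Y [f pf]. apply ProofIrrelevanceTheory.subset_eq_compat. reflexivity.
Defined.

(* The representing object R of an initial object of Rep(A,D) is pinned down by Yoneda: a
   morphism A(R,-) -> A(R',-) is precomposition with a coalgebra map R' -> R.  In each case
   the candidate R has at most one morphism to every object (it is initial, or a final
   object reached by an epimorphism from the initial one), so every co-operation on it is a
   D-coalgebra and A(R,-) takes only values with at most one element.  It then suffices to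
   find, for every D-coalgebra R', a unique morphism R' -> R compatible with the
   co-operations: it exists because R is final, or because R' is itself initial (a
   zeroary operation of D gives a morphism from |R'| to the empty coproduct), or it is the
   unique derived constant of D evaluated in A(R', initial).  For the consequence, A is a
   variety: its initial algebra is strict when A has no constants, is also final when A has
   exactly one derived constant, and otherwise maps epimorphically onto the one-element
   algebra; in each case the relevant part above gives an initial representable taking
   values with at most one element. *)
From Stdlib Require Import ProofIrrelevance Classical FunctionalExtensionality
  ClassicalEpsilon.

Definition HomsFromUnique (C : Category) (X : Obj C) : Prop :=
  forall (Y : Obj C) (f g : Hom X Y), f = g.

Section CategoryFacts.

Variable C : Category.

Lemma initial_homs_unique (X : Obj C) : IsInitial C X -> HomsFromUnique C X.
Proof. intros HX Y f g. destruct (HX Y) as [h Hh]. now rewrite (Hh f), (Hh g). Qed.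

Lemma epi_from_initial_homs_unique (I0 T : Obj C) (u : Hom I0 T) :
  IsInitial C I0 -> Epi C I0 T u -> HomsFromUnique C T.
Proof. intros HI He Y f g. apply He, initial_homs_unique, HI. Qed.

Lemma initial_final_of_hom_from_final (I0 T : Obj C) (v : Hom T I0) :
  IsInitial C I0 -> IsFinal C T -> IsFinal C I0.
Proof.
  intros HI HT W. destruct (HT W) as [w Hw]. destruct (HT I0) as [u _].
  exists (comp v w). intros g.
  rewrite <- (comp_id_l _ _ _ g), (initial_homs_unique I0 HI I0 (idm I0) (comp v u)).
  rewrite <- comp_assoc. f_equal. apply Hw.
Qed.

Definition init_map (X : Obj C) (HX : IsInitial C X) (Y : Obj C) : Hom X Y :=
  proj1_sig (constructive_indefinite_description _ (HX Y)).

Variable CP : Coproducts C.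

Lemma coprod_empty_initial (I : Type) (X : I -> Obj C) :
  (I -> False) -> IsInitial C (coprod CP I X).
Proof.
  intros HI Y. exists (copair CP (fun i => match HI i with end)).
  intros g. apply copair_unique. intros i. destruct (HI i).
Qed.

Lemma comp_copair (I : Type) (X : I -> Obj C) (Y W : Obj C)
  (g : Hom Y W) (fs : forall i, Hom (X i) Y) :
  comp g (copair CP fs) = copair CP (fun i => comp g (fs i)).
Proof. apply copair_unique. intros i. now rewrite <- comp_assoc, copair_inj. Qed.

Lemma comp_hom_ops (S : Sig) (Y : Obj C) (t : CoOps C CP S Y) (W W' : Obj C)
  (g : Hom W W') (o : op S) (fs : ar S o -> Hom Y W) :
  comp g (hom_ops t W o fs) = hom_ops t W' o (fun k => comp g (fs k)).
Proof. unfold hom_ops. now rewrite comp_assoc, comp_copair. Qed.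

End CategoryFacts.

Arguments init_map {C X} HX Y.

Lemma eval_morph (S : Sig) (A B : Type) (IA : OpsOn S A) (IB : OpsOn S B) (h : A -> B) :
  (forall o xs, h (IA o xs) = IB o (fun k => h (xs k))) ->
  forall V (env : V -> A) (t : term S V), h (eval IA env t) = eval IB (fun v => h (env v)) t.
Proof.
  intros Hh V env t. induction t as [v | o ts IH]; simpl; [reflexivity |].
  rewrite Hh. f_equal. extensionality k. apply IH.
Qed.

Lemma ceval_morph (S : Sig) (A B : Type) (IA : OpsOn S A) (IB : OpsOn S B) (h : A -> B) :
  (forall o xs, h (IA o xs) = IB o (fun k => h (xs k))) ->
  forall t : term S Empty_set, h (ceval IA t) = ceval IB t.
Proof.
  intros Hh t. unfold ceval. rewrite (eval_morph S A B IA IB h Hh).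
  f_equal. extensionality e. destruct e.
Qed.

Lemma HasZeroary_of_not_NoZeroary (D : Variety) : ~ NoZeroary D -> HasZeroary D.
Proof.
  intros HN. apply NNPP. intros Hno. apply HN. intros o. apply NNPP. intros Ho.
  apply Hno. exists o. intros k. apply Ho. exact (inhabits k).
Qed.

Lemma ManyDerivedConst_of_not_AtMostOne (D : Variety) :
  ~ AtMostOneDerivedConst D -> ManyDerivedConst D.
Proof.
  intros HA. apply NNPP. intros Hno. apply HA. intros A I HS t1 t2. apply NNPP.
  intros Hne. apply Hno. now exists t1, t2, A, I.
Qed.

Lemma ExactlyOne_of_HasZeroary (D : Variety) :
  HasZeroary D -> AtMostOneDerivedConst D -> ExactlyOneDerivedConst D.
Proof.
  intros [o Ho] HA. split; [| exact HA].
  exact (inhabits (tapp o (fun k => match Ho k with end))).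
Qed.

Section Representables.

Variables (C : Category) (CP : Coproducts C) (D : Variety).

Definition PrecompHom (X : Obj C) (s : CoOps C CP (vsig D) X)
  (Y : Obj C) (t : CoOps C CP (vsig D) Y) (v : Hom Y X) : Prop :=
  forall (Z : Obj C) o fs, comp (hom_ops s Z o fs) v = hom_ops t Z o (fun k => comp (fs k) v).

(* Yoneda: a natural transformation eta : A(X,-) -> A(Y,-) is precomposition with
   eta_X(id_X), and it is a D-homomorphism iff that precomposition is. *)
Lemma RepInitial_of_unique_PrecompHom (X : Obj C) (s : CoOps C CP (vsig D) X) :
  IsDCoalg C CP D X s ->
  (forall Y t, IsDCoalg C CP D Y t ->
     exists v : Hom Y X, PrecompHom X s Y t v /\ forall w, PrecompHom X s Y t w -> w = v) ->
  RepInitial C CP D X s.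
Proof.
  intros HX H. split; [exact HX |]. intros Y t HY.
  destruct (H Y t HY) as [v [Hv Hvu]].
  exists (fun Z f => comp f v). split; [split |].
  - intros Z W g f. symmetry. apply comp_assoc.
  - intros Z o fs. apply Hv.
  - intros eta [Hnat Hhom].
    assert (Heta : forall Z f, eta Z f = comp f (eta X (idm X))).
    { intros Z f. now rewrite <- Hnat, comp_id_r. }
    assert (Hid : eta X (idm X) = v).
    { apply Hvu. intros Z o fs. rewrite <- Heta, Hhom. f_equal.
      extensionality k. apply Heta. }
    intros Z f. now rewrite Heta, Hid.
Qed.

Lemma DCoalg_of_homs_unique (X : Obj C) (s : CoOps C CP (vsig D) X) :
  HomsFromUnique C X -> IsDCoalg C CP D X s.
Proof. intros HX Y e env. apply HX. Qed.

Lemma RepInitial_of_homs_unique (X : Obj C) (s : CoOps C CP (vsig D) X) :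
  HomsFromUnique C X ->
  (forall Y t, IsDCoalg C CP D Y t -> exists v : Hom Y X, forall w, w = v) ->
  RepInitial C CP D X s.
Proof.
  intros HX H. apply RepInitial_of_unique_PrecompHom; [now apply DCoalg_of_homs_unique |].
  intros Y t HY. destruct (H Y t HY) as [v Hv]. exists v. split; [| intros w _; apply Hv].
  intros Z o fs.
  replace (fun k => comp (fs k) v) with (fun _ : ar (vsig D) o => comp (hom_ops s Z o fs) v)
    by (extensionality k; f_equal; apply HX).
  rewrite <- comp_hom_ops. f_equal. rewrite (Hv (hom_ops t X o _)). apply Hv.
Qed.

Lemma final_RepInitial (X : Obj C) (s : CoOps C CP (vsig D) X) :
  IsFinal C X -> HomsFromUnique C X -> RepInitial C CP D X s.
Proof.
  intros HF HX. apply RepInitial_of_homs_unique; [exact HX |].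
  intros Y t _. destruct (HF Y) as [v Hv]. now exists v.
Qed.

Lemma comp_ceval_hom_ops (Y : Obj C) (t : CoOps C CP (vsig D) Y) (W W' : Obj C)
  (g : Hom W W') (c : term (vsig D) Empty_set) :
  comp g (ceval (hom_ops t W) c) = ceval (hom_ops t W') c.
Proof. apply ceval_morph. intros o xs. apply comp_hom_ops. Qed.

(* The only candidate R' -> I0 is the derived constant of D computed in A(R', I0). *)
Lemma RepInitial_initial_of_ExactlyOne (I0 : Obj C) (HI : IsInitial C I0) :
  ExactlyOneDerivedConst D -> RepInitial C CP D I0 (fun o => init_map HI _).
Proof.
  intros [[c] HA]. set (s := fun o => init_map HI _).
  assert (Hs : HomsFromUnique C I0) by now apply initial_homs_unique.
  apply RepInitial_of_unique_PrecompHom; [now apply DCoalg_of_homs_unique |].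
  intros Y t HY. exists (ceval (hom_ops t I0) c). split.
  - intros Z o fs. rewrite !comp_ceval_hom_ops.
    replace (fun k => comp (fs k) (ceval (hom_ops t I0) c))
      with (fun _ : ar (vsig D) o => ceval (hom_ops t Z) c)
      by (extensionality k; symmetry; apply comp_ceval_hom_ops).
    exact (HA _ _ (HY Z) c (tapp o (fun _ => c))).
  - intros w Hw.
    rewrite <- (comp_id_l _ _ _ w), (Hs I0 (idm I0) (ceval (hom_ops s I0) c)).
    exact (ceval_morph _ _ _ _ _ (fun g => comp g w) (Hw I0) c).
Qed.

Lemma RepInitial_homs_unique_transfer (X : Obj C) (s : CoOps C CP (vsig D) X)
  (Z : Obj C) (sz : CoOps C CP (vsig D) Z) :
  RepInitial C CP D X s -> RepInitial C CP D Z sz ->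
  HomsFromUnique C Z -> HomsFromUnique C X.
Proof.
  intros [HXc HXi] [HZc HZi] HZ.
  destruct (HXi Z sz HZc) as [e1 [[n1 h1] _]].
  destruct (HZi X s HXc) as [e2 [[n2 h2] _]].
  destruct (HXi X s HXc) as [e0 [_ He0]].
  assert (Hround : forall W f, e2 W (e1 W f) = e0 W f).
  { apply He0. split; intros; [now rewrite n1, n2 | now rewrite h1, h2]. }
  assert (Hid : forall W (f : Hom X W), f = e0 W f).
  { apply (He0 (fun W f => f)). split; reflexivity. }
  intros W f g. rewrite (Hid W f), (Hid W g), <- !Hround. f_equal. apply HZ.
Qed.

Lemma part_i (I0 : Obj C) :
  IsInitial C I0 -> (forall X : Obj C, Hom X I0 -> IsInitial C X) -> HasZeroary D ->
  forall (X : Obj C) (s : CoOps C CP (vsig D) X), IsDCoalg C CP D X s ->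
    IsInitial C X /\ (forall Y : Obj C, Singleton (Hom X Y)) /\ RepInitial C CP D X s.
Proof.
  intros HI Hstrict [o Ho].
  assert (Hcoop_initial : forall Y (t : CoOps C CP (vsig D) Y), IsInitial C Y).
  { intros Y t. apply Hstrict. exact (comp (copair CP (fun k => match Ho k with end)) (t o)). }
  intros X s _. assert (HX := Hcoop_initial X s).
  split; [exact HX | split; [exact HX |]].
  apply RepInitial_of_homs_unique; [now apply initial_homs_unique |].
  intros Y t _. destruct (Hcoop_initial Y t X) as [v Hv]. now exists v.
Qed.

Lemma part_ii (Z : Obj C) :
  IsInitial C Z -> IsFinal C Z ->
  exists s : CoOps C CP (vsig D) Z,
    IsDCoalg C CP D Z s /\
    (forall s' : CoOps C CP (vsig D) Z, IsDCoalg C CP D Z s' -> forall o, s' o = s o) /\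
    RepInitial C CP D Z s /\ (forall Y : Obj C, Singleton (Hom Z Y)).
Proof.
  intros HI HF. assert (HZ := initial_homs_unique C Z HI).
  exists (fun o => init_map HI _). split; [| split; [| split]].
  - now apply DCoalg_of_homs_unique.
  - intros s' _ o. apply HZ.
  - now apply final_RepInitial.
  - exact HI.
Qed.

Lemma part_iii_a (I0 T : Obj C) (u : Hom I0 T) :
  IsInitial C I0 -> IsFinal C T -> Epi C I0 T u -> NoZeroary D ->
  exists s : CoOps C CP (vsig D) T,
    IsDCoalg C CP D T s /\
    (forall s' : CoOps C CP (vsig D) T, IsDCoalg C CP D T s' -> forall o, s' o = s o) /\
    RepInitial C CP D T s /\
    (forall Y : Obj C,
       (inhabited (Hom T Y) -> Singleton (Hom T Y)) /\
       (~ inhabited (Hom T Y) -> EmptyT (Hom T Y))).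
Proof.
  intros HI HF He HN. assert (HT := epi_from_initial_homs_unique C I0 T u HI He).
  exists (fun o => coinj CP (X := fun _ => T) (epsilon (HN o) (fun _ => True))).
  split; [| split; [| split]].
  - now apply DCoalg_of_homs_unique.
  - intros s' _ o. apply HT.
  - now apply final_RepInitial.
  - intros Y. split.
    + intros [f]. exists f. intros g. apply HT.
    + intros Hno f. exact (Hno (inhabits f)).
Qed.

Lemma part_iii_b (I0 : Obj C) :
  IsInitial C I0 -> ExactlyOneDerivedConst D ->
  exists s : CoOps C CP (vsig D) I0,
    IsDCoalg C CP D I0 s /\
    (forall s' : CoOps C CP (vsig D) I0, IsDCoalg C CP D I0 s' -> forall o, s' o = s o) /\
    RepInitial C CP D I0 s /\ (forall Y : Obj C, Singleton (Hom I0 Y)).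
Proof.
  intros HI HE. assert (HX := initial_homs_unique C I0 HI).
  exists (fun o => init_map HI _). split; [| split; [| split]].
  - now apply DCoalg_of_homs_unique.
  - intros s' _ o. apply HX.
  - now apply RepInitial_initial_of_ExactlyOne.
  - exact HI.
Qed.

(* The hypothesis that I0 -> T is not an isomorphism only excludes case (ii). *)
Lemma part_iii (I0 T : Obj C) (u : Hom I0 T) :
  IsInitial C I0 -> IsFinal C T -> Epi C I0 T u -> ~ Iso C I0 T u ->
  AtMostOneDerivedConst D ->
  (exists (X : Obj C) (s : CoOps C CP (vsig D) X), RepInitial C CP D X s) /\
  (NoZeroary D ->
     exists s : CoOps C CP (vsig D) T,
       IsDCoalg C CP D T s /\
       (forall s' : CoOps C CP (vsig D) T, IsDCoalg C CP D T s' -> forall o, s' o = s o) /\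
       RepInitial C CP D T s /\
       (forall Y : Obj C,
          (inhabited (Hom T Y) -> Singleton (Hom T Y)) /\
          (~ inhabited (Hom T Y) -> EmptyT (Hom T Y)))) /\
  (ExactlyOneDerivedConst D ->
     exists s : CoOps C CP (vsig D) I0,
       IsDCoalg C CP D I0 s /\
       (forall s' : CoOps C CP (vsig D) I0, IsDCoalg C CP D I0 s' -> forall o, s' o = s o) /\
       RepInitial C CP D I0 s /\ (forall Y : Obj C, Singleton (Hom I0 Y))).
Proof.
  intros HI HF He _ HA. split; [| split].
  - destruct (classic (NoZeroary D)) as [HN | HN].
    + destruct (part_iii_a I0 T u HI HF He HN) as [s [_ [_ [HR _]]]]. eauto.
    + assert (HE := ExactlyOne_of_HasZeroary D (HasZeroary_of_not_NoZeroary D HN) HA).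
      destruct (part_iii_b I0 HI HE) as [s [_ [_ [HR _]]]]. eauto.
  - now apply part_iii_a with I0 u.
  - now apply part_iii_b.
Qed.

End Representables.

Section Varieties.

Variable V : Variety.

Lemma alghom_eq (A B : AlgObj V) (f g : AlgHom V A B) : proj1_sig f = proj1_sig g -> f = g.
Proof. destruct f as [f pf], g as [g pg]. simpl. intros <-. f_equal. apply proof_irrelevance. Qed.

Definition unitAlg : AlgObj V.
Proof.
  refine {| acar := unit; aops := fun _ _ => tt |}.
  intros e env. now destruct (eval _ env (ax_lhs V e)), (eval _ env (ax_rhs V e)).
Defined.

Lemma unitAlg_final : IsFinal (VarCat V) unitAlg.
Proof.
  intros Y. unshelve eexists.
  - exists (fun _ => tt). intros o xs. reflexivity.
  - intros g. apply alghom_eq. extensionality x. now destruct (proj1_sig g x).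
Qed.

Definition emptyAlg (HN : NoZeroary V) : AlgObj V.
Proof.
  refine {| acar := Empty_set;
            aops := fun o xs =>
              False_rect _ (match HN o with inhabits k => match xs k with end end) |}.
  intros e env. destruct (eval _ env (ax_lhs V e)).
Defined.

Lemma initial_strict_of_NoZeroary (HN : NoZeroary V) (I0 : Obj (VarCat V)) :
  IsInitial (VarCat V) I0 -> forall X : Obj (VarCat V), Hom X I0 -> IsInitial (VarCat V) X.
Proof.
  intros HI X m.
  set (e := proj1_sig (comp (init_map HI (emptyAlg HN : Obj (VarCat V))) m)).
  intros W. unshelve eexists.
  - exists (fun x => match e x with end). intros o xs. destruct (e (aops X o xs)).
  - intros g. apply alghom_eq. extensionality x. destruct (e x).
Qed.

Lemma initial_final_of_AtMostOne (I0 : Obj (VarCat V)) :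
  IsInitial (VarCat V) I0 -> HasZeroary V -> AtMostOneDerivedConst V ->
  IsFinal (VarCat V) I0.
Proof.
  intros HI [o Ho] HA.
  set (c := tapp o (fun k => match Ho k with end) : term (vsig V) Empty_set).
  apply (initial_final_of_hom_from_final _ I0 unitAlg); [| exact HI | exact unitAlg_final].
  exists (fun _ => ceval (aops I0) c). intros o' xs.
  exact (HA _ _ (asat V I0) c (tapp o' (fun _ => c))).
Qed.

Lemma epi_to_unitAlg (A : Obj (VarCat V)) (x : acar A) (u : Hom A (unitAlg : Obj (VarCat V))) :
  Epi (VarCat V) A unitAlg u.
Proof.
  intros W f g Hfg. apply alghom_eq. extensionality y. destruct y.
  assert (Hx : proj1_sig f (proj1_sig u x) = proj1_sig g (proj1_sig u x))
    by exact (f_equal (fun m => proj1_sig m x) Hfg).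
  revert Hx. generalize (proj1_sig u x). now intros [].
Qed.

End Varieties.

Lemma nontrivial_initial_rep_zeroary_cases (VA D : Variety) (CP : Coproducts (VarCat VA)) (X : Obj (VarCat VA))
  (s : CoOps (VarCat VA) CP (vsig D) X) :
  RepInitial (VarCat VA) CP D X s ->
  (exists (Y : Obj (VarCat VA)) (f g : Hom X Y), f <> g) ->
  (NoZeroary VA /\ NoZeroary D) \/ (ManyDerivedConst VA /\ ManyDerivedConst D).
Proof.
  intros HR [Y [f [g Hfg]]].
  assert (Hno_unique_rep : forall Z sz, RepInitial _ CP D Z sz -> ~ HomsFromUnique _ Z).
  { intros Z sz HRZ HZ.
    exact (Hfg (RepInitial_homs_unique_transfer _ CP D X s Z sz HR HRZ HZ Y f g)). }
  set (I0 := coprod CP Empty_set (fun e => match e with end)).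
  assert (HI0 : IsInitial (VarCat VA) I0) by (apply coprod_empty_initial; intros []).
  destruct (classic (NoZeroary VA)) as [HNA | HNA].
  - left. split; [exact HNA |]. apply NNPP. intros HND.
    destruct (part_i _ CP D I0 HI0 (initial_strict_of_NoZeroary VA HNA I0 HI0)
                (HasZeroary_of_not_NoZeroary D HND) X s (proj1 HR)) as [HX _].
    exact (Hfg (initial_homs_unique _ X HX Y f g)).
  - apply HasZeroary_of_not_NoZeroary in HNA.
    destruct (classic (AtMostOneDerivedConst VA)) as [HAA | HAA].
    { destruct (part_ii _ CP D I0 HI0 (initial_final_of_AtMostOne VA I0 HI0 HNA HAA))
        as [sz [_ [_ [HRZ _]]]].
      exfalso. exact (Hno_unique_rep I0 sz HRZ (initial_homs_unique _ I0 HI0)). }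
    apply ManyDerivedConst_of_not_AtMostOne in HAA.
    right. split; [exact HAA |]. apply ManyDerivedConst_of_not_AtMostOne. intros HAD.
    set (u := init_map HI0 (unitAlg VA : Obj (VarCat VA))).
    destruct HNA as [o Ho].
    assert (He := epi_to_unitAlg VA I0 (aops I0 o (fun k => match Ho k with end)) u).
    destruct (classic (NoZeroary D)) as [HND | HND].
    + destruct (part_iii_a _ CP D I0 _ u HI0 (unitAlg_final VA) He HND)
        as [sz [_ [_ [HRZ _]]]].
      exact (Hno_unique_rep _ sz HRZ (epi_from_initial_homs_unique _ I0 _ u HI0 He)).
    + destruct (part_iii_b _ CP D I0 HI0
                  (ExactlyOne_of_HasZeroary D (HasZeroary_of_not_NoZeroary D HND) HAD))
        as [sz [_ [_ [HRZ _]]]].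
      exact (Hno_unique_rep I0 sz HRZ (initial_homs_unique _ I0 HI0)).
Qed.

Theorem theorem2p1 :
  (forall (C : Category) (CP : Coproducts C) (D : Variety) (I0 : Obj C),
     IsInitial C I0 ->
     (forall (X : Obj C), Hom X I0 -> IsInitial C X) ->
     HasZeroary D ->
     forall (X : Obj C) (s : CoOps C CP (vsig D) X),
       IsDCoalg C CP D X s ->
       IsInitial C X /\ (forall Y : Obj C, Singleton (Hom X Y)) /\
       RepInitial C CP D X s)
  /\
  (forall (C : Category) (CP : Coproducts C) (D : Variety) (Z : Obj C),
     IsInitial C Z -> IsFinal C Z ->
     exists s : CoOps C CP (vsig D) Z,
       IsDCoalg C CP D Z s /\
       (forall s' : CoOps C CP (vsig D) Z, IsDCoalg C CP D Z s' ->
          forall o, s' o = s o) /\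
       RepInitial C CP D Z s /\
       (forall Y : Obj C, Singleton (Hom Z Y)))
  /\
  (forall (C : Category) (CP : Coproducts C) (D : Variety) (I0 T : Obj C)
     (u : Hom I0 T),
     IsInitial C I0 -> IsFinal C T -> Epi C I0 T u -> ~ Iso C I0 T u ->
     AtMostOneDerivedConst D ->
     (exists (X : Obj C) (s : CoOps C CP (vsig D) X), RepInitial C CP D X s) /\
     (NoZeroary D ->
        exists s : CoOps C CP (vsig D) T,
          IsDCoalg C CP D T s /\
          (forall s' : CoOps C CP (vsig D) T, IsDCoalg C CP D T s' ->
             forall o, s' o = s o) /\
          RepInitial C CP D T s /\
          (forall Y : Obj C,
             (inhabited (Hom T Y) -> Singleton (Hom T Y)) /\
             (~ inhabited (Hom T Y) -> EmptyT (Hom T Y)))) /\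
     (ExactlyOneDerivedConst D ->
        exists s : CoOps C CP (vsig D) I0,
          IsDCoalg C CP D I0 s /\
          (forall s' : CoOps C CP (vsig D) I0, IsDCoalg C CP D I0 s' ->
             forall o, s' o = s o) /\
          RepInitial C CP D I0 s /\
          (forall Y : Obj C, Singleton (Hom I0 Y))))
  /\
  (forall (VA D : Variety) (CP : Coproducts (VarCat VA)) (X : Obj (VarCat VA))
     (s : CoOps (VarCat VA) CP (vsig D) X),
     RepInitial (VarCat VA) CP D X s ->
     (exists (Y : Obj (VarCat VA)) (f g : Hom X Y), f <> g) ->
     (NoZeroary VA /\ NoZeroary D) \/ (ManyDerivedConst VA /\ ManyDerivedConst D)).
Proof.
  split; [exact part_i|]. split; [exact part_ii|]. split; [exact part_iii|].
  exact nontrivial_initial_rep_zeroary_cases.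
Qed.
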